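(* Let $M_n=V\,{\rm diag}(\Lambda_{n1},\dots,\Lambda_{nd})V^{-1}$, $n=1,\dots,N$, with $V$ real invertible and $\Lambda_{ni}$ real, such that $\gamma=\min_{i>i'}\sum_{n=1}^N(\Lambda_{ni}-\Lambda_{ni'})^2>0$, and let $U_\circ$ be an orthogonal matrix with ${\rm low}(U_\circ^TM_nU_\circ)=0$ for all $n$. Then $$T=\sum_nt_n^Tt_n,\qquad t_n=P_{\rm low}\big(1\otimes U_\circ^TM_n^TU_\circ-U_\circ^TM_nU_\circ\otimes1\big)P_{\rm low}^T$$ is invertible, and $\sigma_{\min}(T)\ge\frac{\gamma}{\kappa(V)^4}$ and $\|T^{-1}\|\le\sqrt{\frac{d(d-1)}2}\,\frac{\kappa(V)^4}{\gamma}$.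
   Context: All matrices are real. ${\rm low}(A)$ is the strictly lower-triangular part of $A$. $\otimes$ is the Kronecker product, $1$ the identity. $P_{\rm low}\in\{0,1\}^{\frac{d(d-1)}2\times d^2}$ has as rows the standard basis row vectors of $\mathbb R^{d^2}$ selecting (in increasing order) the entries of the column-wise vectorization ${\rm vec}(A)$ corresponding to strictly lower-triangular entries of $A$. $\|\cdot\|$ is the Frobenius norm, $\sigma_{\min}$ the smallest singular value, $\kappa(V)=\sigma_{\max}(V)/\sigma_{\min}(V)$. *)

From HB Require Import structures.
From mathcomp Require Import all_boot all_order all_algebra.
From mathcomp Require Import boolp classical_sets reals.
Set Implicit Arguments. Unset Strict Implicit. Unset Printing Implicit Defensive.
Import Order.TTheory GRing.Theory Num.Theory.
Local Open Scope ring_scope.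

Section Defs.
Variable R : realType.

Lemma div_ord_lt d (i : 'I_(d * d)) : (i %/ d < d)%N.
Proof.
case: d i => [|d] i; first by case: i.
by rewrite ltn_divLR // ltn_ord.
Qed.

Lemma mod_ord_lt d (i : 'I_(d * d)) : (i %% d < d)%N.
Proof.
case: d i => [|d] i; first by case: i.
by rewrite ltn_pmod.
Qed.

Definition odiv d (i : 'I_(d * d)) : 'I_d := Ordinal (div_ord_lt i).
Definition omod d (i : 'I_(d * d)) : 'I_d := Ordinal (mod_ord_lt i).

(* Standard Kronecker product, flattened index (i1,i2) |-> i1*d + i2. *)
Definition kron d (A B : 'M[R]_d) : 'M[R]_(d * d) :=
  \matrix_(i, j) (A (odiv i) (odiv j) * B (omod i) (omod j)).

(* Column-wise vectorization: vec(A)_k = A (k %% d) (k %/ d).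
   Indices k of vec(A) corresponding to strictly lower-triangular entries,
   in increasing order. *)
Definition low_idx d : seq nat :=
  [seq k <- iota 0 (d * d) | (k %/ d < k %% d)%N].

Definition Plow d : 'M[R]_((d * (d - 1)) %/ 2, d * d) :=
  \matrix_(m, k) ((nth 0%N (low_idx d) m == k)%:R).

Definition frob m n (A : 'M[R]_(m, n)) : R :=
  Num.sqrt (\sum_i \sum_j A i j ^+ 2).

Definition sigma_max n (A : 'M[R]_n) : R :=
  sup [set frob (A *m x) | x in [set x : 'cV[R]_n | frob x = 1]].
Definition sigma_min n (A : 'M[R]_n) : R :=
  inf [set frob (A *m x) | x in [set x : 'cV[R]_n | frob x = 1]].
Definition kappa n (A : 'M[R]_n) : R := sigma_max A / sigma_min A.

End Defs.

From HB Require Import structures.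
From mathcomp Require Import all_boot all_order all_algebra.
From mathcomp Require Import boolp classical_sets reals.
From mathcomp Require Import ring lra zify.
Set Implicit Arguments. Unset Strict Implicit. Unset Printing Implicit Defensive.
Import Order.TTheory GRing.Theory Num.Theory.
Local Open Scope ring_scope.

(* For x in R^(d(d-1)/2), Plow^T x is the vectorization of a strictly lower triangular X, and
   x^T T x = sum_n |t_n x|^2 = sum_n |B_n^T X - X B_n^T|^2.  Since B_n^T = G^-1 Lambda_n G with
   G = V^T U, conjugation by G turns these commutators into Lambda_n Y - Y Lambda_n with
   Y = G X G^-1, whose squared norms sum to sum_(a <> b) (sum_n (Lambda_na - Lambda_nb)^2) Y_ab^2,
   at least gamma |Y|^2 as soon as Y has a zero diagonal.  It does: Y_ii = tr (P_i X) for the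
   spectral projector P_i = G^-1 e_i e_i^T G, which is a polynomial (a Lagrange product) in the
   lower triangular B_n^T, hence lower triangular, while X is strictly lower triangular.
   Conjugating back and forth costs kappa(V)^4, so x^T T x >= gamma / kappa(V)^4 |x|^2, which
   yields invertibility and both bounds. *)

Section SquaredFrobeniusNorm.
Variable R : realFieldType.

Definition frob2 m n (A : 'M[R]_(m, n)) : R := \sum_i \sum_j A i j ^+ 2.

Definition vdot n (u v : 'cV[R]_n) : R := (u^T *m v) 0 0.

Lemma frob2_ge0 m n (A : 'M[R]_(m, n)) : 0 <= frob2 A.
Proof. by apply: sumr_ge0 => i _; apply: sumr_ge0 => j _; apply: sqr_ge0. Qed.

Lemma frob2_eq0 m n (A : 'M[R]_(m, n)) : (frob2 A == 0) = (A == 0).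
Proof.
apply/idP/eqP => [|->]; last first.
  by rewrite /frob2 big1 // => i _; rewrite big1 // => j _; rewrite mxE expr0n.
rewrite psumr_eq0 => [/allP A0|i _]; last by apply: sumr_ge0 => j _; apply: sqr_ge0.
apply/matrixP => i j; rewrite mxE; move: (A0 i (mem_index_enum i)).
rewrite /= psumr_eq0 => [/allP/(_ j (mem_index_enum j))|k _]; last exact: sqr_ge0.
by rewrite sqrf_eq0 => /eqP.
Qed.

Lemma frob20 m n : frob2 (0 : 'M[R]_(m, n)) = 0.
Proof. by apply/eqP; rewrite frob2_eq0. Qed.

Lemma frob2_gt0 m n (A : 'M[R]_(m, n)) : A != 0 -> 0 < frob2 A.
Proof. by rewrite -frob2_eq0 lt_def frob2_ge0 andbT. Qed.

Lemma frob2_tr m n (A : 'M[R]_(m, n)) : frob2 A^T = frob2 A.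
Proof.
by rewrite /frob2 exchange_big; apply: eq_bigr => i _; apply: eq_bigr => j _; rewrite mxE.
Qed.

Lemma frob2_scale m n (a : R) (A : 'M[R]_(m, n)) : frob2 (a *: A) = a ^+ 2 * frob2 A.
Proof.
rewrite /frob2 mulr_sumr; apply: eq_bigr => i _; rewrite mulr_sumr.
by apply: eq_bigr => j _; rewrite mxE exprMn.
Qed.

Lemma frob2_col m n (A : 'M[R]_(m, n)) : frob2 A = \sum_j frob2 (col j A).
Proof.
rewrite /frob2 exchange_big; apply: eq_bigr => j _; apply: eq_bigr => i _.
by rewrite big_ord1 mxE.
Qed.

Lemma frob2_cV n (u : 'cV[R]_n) : frob2 u = \sum_i u i 0 ^+ 2.
Proof. by apply: eq_bigr => i _; rewrite big_ord1. Qed.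

Lemma vdotE n (u v : 'cV[R]_n) : vdot u v = \sum_i u i 0 * v i 0.
Proof. by rewrite /vdot mxE; apply: eq_bigr => i _; rewrite mxE. Qed.

Lemma vdotuu n (u : 'cV[R]_n) : vdot u u = frob2 u.
Proof. by rewrite vdotE frob2_cV; apply: eq_bigr => i _; rewrite expr2. Qed.

Lemma vdot_mulmxl m n (A : 'M[R]_(m, n)) u v : vdot (A *m u) v = vdot u (A^T *m v).
Proof. by rewrite /vdot trmx_mul mulmxA. Qed.

Lemma vdot_sum_gram m n (I : Type) (r : seq I) (P : pred I) (F : I -> 'M[R]_(m, n)) x :
  vdot x ((\sum_(i <- r | P i) (F i)^T *m F i) *m x) = \sum_(i <- r | P i) frob2 (F i *m x).
Proof.
rewrite /vdot mulmx_suml mulmx_sumr summxE; apply: eq_bigr => i _.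
by rewrite -vdotuu vdot_mulmxl -[(F i)^T *m F i *m x]mulmxA.
Qed.

Lemma CauchySchwarz_vdot n (u v : 'cV[R]_n) : vdot u v ^+ 2 <= frob2 u * frob2 v.
Proof.
have [->|u0] := eqVneq u 0.
  by rewrite /vdot trmx0 mul0mx mxE expr0n /= mulr_ge0 ?frob2_ge0.
have a_gt0 := frob2_gt0 u0; set a := frob2 u in a_gt0 *; set b := vdot u v.
have : 0 <= \sum_i (a * v i 0 - b * u i 0) ^+ 2 by apply: sumr_ge0 => i _; apply: sqr_ge0.
have -> : \sum_i (a * v i 0 - b * u i 0) ^+ 2 =
    \sum_i (a ^+ 2 * v i 0 ^+ 2 - 2 * a * b * (u i 0 * v i 0) + b ^+ 2 * u i 0 ^+ 2).
  by apply: eq_bigr => i _; ring.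
rewrite !big_split /= sumrN -!mulr_sumr -!frob2_cV -(vdotE u v) -/a -/b => h.
suff : 0 <= a * (a * frob2 v - b ^+ 2) by rewrite pmulr_rge0 // subr_ge0 mulrC.
by rewrite mulrBr; nra.
Qed.

Lemma frob2_mulmx_le m n (A : 'M[R]_(m, n)) (x : 'cV_n) : frob2 (A *m x) <= frob2 A * frob2 x.
Proof.
rewrite frob2_cV /frob2 mulr_suml; apply: ler_sum => i _.
have -> : (A *m x) i 0 = vdot (row i A)^T x.
  by rewrite vdotE mxE; apply: eq_bigr => j _; rewrite !mxE.
have -> : \sum_j A i j ^+ 2 = frob2 (row i A)^T.
  by rewrite frob2_tr /frob2 big_ord1; apply: eq_bigr => j _; rewrite mxE.
exact: CauchySchwarz_vdot.
Qed.

Definition opbound m n (A : 'M[R]_(m, n)) (s : R) :=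
  forall x : 'cV_n, frob2 (A *m x) <= s * frob2 x.

Lemma opbound_mulmx m n p (A : 'M[R]_(m, n)) (B : 'M[R]_(n, p)) s t :
  0 <= s -> opbound A s -> opbound B t -> opbound (A *m B) (s * t).
Proof.
move=> s_ge0 hA hB x; rewrite -mulmxA -mulrA.
exact: le_trans (hA _) (ler_wpM2l s_ge0 (hB x)).
Qed.

Lemma opbound_tr m n (A : 'M[R]_(m, n)) s : 0 <= s -> opbound A s -> opbound A^T s.
Proof.
move=> s_ge0 hA y; set w := A^T *m y.
have [->|w0] := eqVneq w 0; first by rewrite frob20 mulr_ge0 ?frob2_ge0.
have w_gt0 := frob2_gt0 w0.
have e : frob2 w = vdot y (A *m w) by rewrite -vdotuu {1}/w vdot_mulmxl trmxK.
have : frob2 w ^+ 2 <= frob2 y * (s * frob2 w).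
  rewrite {1}e; exact: le_trans (CauchySchwarz_vdot _ _) (ler_wpM2l (frob2_ge0 _) (hA w)).
by rewrite expr2 mulrA ler_pM2r // mulrC.
Qed.

Lemma frob2_mulmxl_le m n p (A : 'M[R]_(m, n)) (M : 'M_(n, p)) s :
  opbound A s -> frob2 (A *m M) <= s * frob2 M.
Proof.
move=> hA; rewrite !(frob2_col (_ *m _)) frob2_col mulr_sumr; apply: ler_sum => j _.
by rewrite !colE -mulmxA.
Qed.

Lemma frob2_mulmxr_le m n p (A : 'M[R]_(n, p)) (M : 'M_(m, n)) s :
  opbound A^T s -> frob2 (M *m A) <= s * frob2 M.
Proof. by move=> hA; rewrite -frob2_tr trmx_mul -(frob2_tr M); apply: frob2_mulmxl_le. Qed.

Lemma frob2_sandwich_le m n p q (P : 'M[R]_(m, n)) (M : 'M_(n, p)) (Q : 'M_(p, q)) s t :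
  0 <= s -> opbound P s -> opbound Q^T t -> frob2 (P *m M *m Q) <= s * t * frob2 M.
Proof.
move=> s_ge0 hP hQ; rewrite -mulmxA -mulrA.
exact: le_trans (frob2_mulmxl_le _ hP) (ler_wpM2l s_ge0 (frob2_mulmxr_le _ hQ)).
Qed.

Lemma opbound_orthomx n (U : 'M[R]_n) : U^T *m U = 1%:M -> opbound U 1.
Proof. by move=> UtU x; rewrite mul1r -!vdotuu vdot_mulmxl mulmxA UtU mul1mx. Qed.

End SquaredFrobeniusNorm.
Section SingularValues.
Variable R : realType.

Lemma frob_sqr m n (A : 'M[R]_(m, n)) : frob A ^+ 2 = frob2 A.
Proof. by rewrite sqr_sqrtr // frob2_ge0. Qed.

Lemma frob_ge0 m n (A : 'M[R]_(m, n)) : 0 <= frob A.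
Proof. exact: sqrtr_ge0. Qed.

Lemma ler_pMfrob m n p q (c : R) (A : 'M[R]_(m, n)) (B : 'M[R]_(p, q)) : 0 <= c ->
  (c * frob A <= frob B) = (c ^+ 2 * frob2 A <= frob2 B).
Proof.
move=> c_ge0; rewrite -{1}(ger0_norm c_ge0) -sqrtr_sqr -sqrtrM ?sqr_ge0 //.
by rewrite ler_sqrt ?frob2_ge0.
Qed.

Lemma ler_frobpM m n p q (c : R) (A : 'M[R]_(m, n)) (B : 'M[R]_(p, q)) : 0 <= c ->
  (frob B <= c * frob A) = (frob2 B <= c ^+ 2 * frob2 A).
Proof.
move=> c_ge0; rewrite -{1}(ger0_norm c_ge0) -sqrtr_sqr -sqrtrM ?sqr_ge0 // ler_sqrt //.
by rewrite mulr_ge0 ?sqr_ge0 ?frob2_ge0.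
Qed.

Lemma frob0 m n : frob (0 : 'M[R]_(m, n)) = 0.
Proof. by rewrite /frob -/(frob2 _) frob20 sqrtr0. Qed.

Lemma frob_scale m n (a : R) (A : 'M[R]_(m, n)) : frob (a *: A) = `|a| * frob A.
Proof. by rewrite /frob -/(frob2 _) frob2_scale sqrtrM ?sqr_ge0 // sqrtr_sqr. Qed.

Lemma frob_normalize n (x : 'cV[R]_n) : x != 0 -> frob ((frob x)^-1 *: x) = 1.
Proof.
move=> x0; have fx_gt0 : 0 < frob x by rewrite sqrtr_gt0 frob2_gt0.
by rewrite frob_scale ger0_norm ?invr_ge0 ?frob_ge0 // mulVf ?gt_eqF.
Qed.

Lemma frob_delta_mx n (k : 'I_n) : frob (delta_mx k 0 : 'cV[R]_n) = 1.
Proof.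
rewrite /frob -/(frob2 _) frob2_cV (bigD1 k) //= big1 => [|j /negPf jk]; last first.
  by rewrite mxE jk expr0n.
by rewrite mxE !eqxx expr1n addr0 sqrtr1.
Qed.

Section Extremal.
Variable n : nat.
Implicit Type A : 'M[R]_n.

Let image_unit_sphere A := [set frob (A *m x) | x in [set x : 'cV[R]_n | frob x = 1]]%classic.

Lemma sigma_max_ub A (x : 'cV_n) : frob (A *m x) <= sigma_max A * frob x.
Proof.
have [->|x0] := eqVneq x 0; first by rewrite mulmx0 frob0 mulr0.
have bounded : has_ubound (image_unit_sphere A).
  exists (frob A) => _ [y /= y1 <-]; rewrite -[frob A]mulr1 -y1 ler_frobpM ?frob_ge0 //.
  by rewrite frob_sqr frob2_mulmx_le.
have := ub_le_sup bounded (ex_intro2 _ _ _ (frob_normalize x0) erefl).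
have fx_gt0 : 0 < frob x by rewrite sqrtr_gt0 frob2_gt0.
by rewrite -scalemxAr frob_scale ger0_norm ?invr_ge0 ?frob_ge0 // ler_pdivrMl // mulrC.
Qed.

Lemma sigma_min_lb A (x : 'cV_n) : sigma_min A * frob x <= frob (A *m x).
Proof.
have [->|x0] := eqVneq x 0; first by rewrite mulmx0 frob0 mulr0.
have bounded : has_lbound (image_unit_sphere A) by exists 0 => _ [y _ <-]; apply: frob_ge0.
have := ge_inf bounded (ex_intro2 _ _ _ (frob_normalize x0) erefl).
have fx_gt0 : 0 < frob x by rewrite sqrtr_gt0 frob2_gt0.
by rewrite -scalemxAr frob_scale ger0_norm ?invr_ge0 ?frob_ge0 // ler_pdivlMl // mulrC.
Qed.

Hypothesis n_gt0 : (0 < n)%N.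

Let e0 : 'cV[R]_n := delta_mx (Ordinal n_gt0) 0.
Let frob_e0 : frob e0 = 1 := frob_delta_mx _.

Variable A : 'M[R]_n.

Lemma sigma_min_ge (c : R) : (forall x : 'cV_n, c * frob x <= frob (A *m x)) -> c <= sigma_min A.
Proof.
move=> lb; apply: lb_le_inf => [|_ [x /= x1 <-]]; last by have := lb x; rewrite x1 mulr1.
by exists (frob (A *m e0)), e0.
Qed.

Lemma sigma_min_le_max : sigma_min A <= sigma_max A.
Proof.
have := le_trans (sigma_min_lb A e0) (sigma_max_ub _ _).
by rewrite frob_e0 !mulr1.
Qed.

Lemma sigma_max_ge0 : 0 <= sigma_max A.
Proof.
have := sigma_max_ub A e0; rewrite frob_e0 mulr1.
exact: le_trans (frob_ge0 _).
Qed.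

Hypothesis A_unit : A \in unitmx.

Lemma sigma_min_gt0 : 0 < sigma_min A.
Proof.
set s := sigma_max (invmx A).
have inv_ub (x : 'cV_n) : frob x <= s * frob (A *m x).
  by have := sigma_max_ub (invmx A) (A *m x); rewrite mulmxA mulVmx // mul1mx.
have s_gt0 : 0 < s.
  rewrite ltNge; apply/negP => s_le0.
  by have := le_trans (inv_ub e0) (mulr_le0_ge0 s_le0 (frob_ge0 _)); rewrite frob_e0 ler10.
apply: lt_le_trans (sigma_min_ge (c := s^-1) _); first by rewrite invr_gt0.
by move=> x; rewrite mulrC ler_pdivrMr // mulrC inv_ub.
Qed.

Lemma opbound_sigma_max : opbound A (sigma_max A ^+ 2).
Proof. by move=> x; rewrite -ler_frobpM ?sigma_max_ub ?sigma_max_ge0. Qed.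

Lemma opbound_invmx_sigma_min : opbound (invmx A) (sigma_min A ^-2).
Proof.
move=> x; have mu_gt0 := sigma_min_gt0.
have := sigma_min_lb A (invmx A *m x); rewrite mulmxA mulmxV // mul1mx ler_pMfrob ?(ltW mu_gt0) //.
by move=> h; rewrite -(ler_pM2l (exprn_gt0 2 mu_gt0)) mulrA mulfV ?gt_eqF ?exprn_gt0 // mul1r.
Qed.

Lemma kappa_gt0 : 0 < kappa A.
Proof. by rewrite divr_gt0 ?sigma_min_gt0 // (lt_le_trans sigma_min_gt0 sigma_min_le_max). Qed.

End Extremal.

Section FrobeniusLowerBound.
Variables (n : nat) (A : 'M[R]_n) (c : R).
Hypothesis c_gt0 : 0 < c.

Lemma frob_mulmx_ge_vdot (x : 'cV[R]_n) :
  c * frob2 x <= vdot x (A *m x) -> c * frob x <= frob (A *m x).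
Proof.
move=> lb; rewrite ler_pMfrob ?(ltW c_gt0) //.
have [->|x0] := eqVneq x 0; first by rewrite mulmx0 frob20 mulr0.
have x_gt0 := frob2_gt0 x0; have cs := CauchySchwarz_vdot x (A *m x).
have : (c * frob2 x) ^+ 2 <= frob2 x * frob2 (A *m x).
  apply: le_trans cs; have : 0 <= c * frob2 x by rewrite mulr_ge0 ?frob2_ge0 ?(ltW c_gt0).
  by nra.
by move=> h; rewrite -(ler_pM2l x_gt0); nra.
Qed.

Hypothesis A_lb : forall x : 'cV[R]_n, c * frob x <= frob (A *m x).

Lemma unitmx_of_frob_lb : A \in unitmx.
Proof.
rewrite -unitmx_tr -row_free_unit; apply: inj_row_free => v /(congr1 trmx).
rewrite trmx_mul trmxK trmx0 => Av0; apply: trmx_inj; rewrite trmx0.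
apply/eqP; rewrite -frob2_eq0 -frob_sqr sqrf_eq0 eq_le frob_ge0 andbT.
by have := A_lb v^T; rewrite Av0 frob0 pmulr_rle0.
Qed.

Lemma frob_invmx_le : frob (invmx A) <= Num.sqrt n%:R * c^-1.
Proof.
have col_le j : frob2 (col j (invmx A)) <= c ^-2.
  have e : A *m col j (invmx A) = delta_mx j 0.
    by rewrite !colE mulmxA mulmxV ?unitmx_of_frob_lb // mul1mx.
  have := A_lb (col j (invmx A)); rewrite e ler_pMfrob ?(ltW c_gt0) // -(frob_sqr (delta_mx j 0)).
  rewrite frob_delta_mx expr1n => h.
  by rewrite -(ler_pM2l (exprn_gt0 2 c_gt0)) mulfV ?gt_eqF ?exprn_gt0.
rewrite -[c^-1]ger0_norm ?invr_ge0 ?(ltW c_gt0) // -sqrtr_sqr -sqrtrM ?ler0n // ler_sqrt.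
  rewrite -/(frob2 _) frob2_col exprVn; apply: le_trans (ler_sum _ (fun j _ => col_le j)) _.
  by rewrite sumr_const card_ord mulr_natl.
by rewrite mulr_ge0 ?ler0n ?sqr_ge0.
Qed.

End FrobeniusLowerBound.
End SingularValues.

Section Triangular.
Variables (R : pzRingType) (n : nat).
Implicit Types (A B X Y : 'M[R]_n).

Definition strictly_lower X := forall i j : 'I_n, (i <= j)%N -> X i j = 0.

Lemma is_trig_mxM A B : is_trig_mx A -> is_trig_mx B -> is_trig_mx (A *m B).
Proof.
move=> /is_trig_mxP A_lo /is_trig_mxP B_lo; apply/is_trig_mxP => i j ij.
rewrite mxE big1 // => k _; have [ik|ki] := ltnP i k; first by rewrite A_lo ?mul0r.
by rewrite B_lo ?mulr0 // (leq_ltn_trans ki ij).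
Qed.

Lemma is_trig_mxD A B : is_trig_mx A -> is_trig_mx B -> is_trig_mx (A + B).
Proof.
move=> /is_trig_mxP A_lo /is_trig_mxP B_lo; apply/is_trig_mxP => i j ij.
by rewrite mxE A_lo ?B_lo ?addr0.
Qed.

Lemma is_trig_mxB A B : is_trig_mx A -> is_trig_mx B -> is_trig_mx (A - B).
Proof.
move=> /is_trig_mxP A_lo /is_trig_mxP B_lo; apply/is_trig_mxP => i j ij.
by rewrite !mxE A_lo ?B_lo ?subr0.
Qed.

Lemma is_trig_mxZ a A : is_trig_mx A -> is_trig_mx (a *: A).
Proof. by move=> /is_trig_mxP A_lo; apply/is_trig_mxP => i j ij; rewrite mxE A_lo ?mulr0. Qed.

Lemma is_trig_mx_sum (I : Type) (r : seq I) (P : pred I) (F : I -> 'M[R]_n) :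
  (forall i, P i -> is_trig_mx (F i)) -> is_trig_mx (\sum_(i <- r | P i) F i).
Proof.
move=> F_lo; apply: (big_ind (fun A : 'M[R]_n => is_trig_mx A)) => //.
  exact: mx0_is_trig.
exact: is_trig_mxD.
Qed.

Lemma is_trig_mx_prod (I : Type) (r : seq I) (P : pred I) (F : I -> 'M[R]_n) :
  (forall i, P i -> is_trig_mx (F i)) -> is_trig_mx (\prod_(i <- r | P i) F i).
Proof.
move=> F_lo; apply: (big_ind (fun A : 'M[R]_n => is_trig_mx A)) => //.
  by rewrite -idmxE scalar_mx_is_trig.
by move=> A B; rewrite -mulmxE; apply: is_trig_mxM.
Qed.

Lemma strictly_lower_mulmxl A X : is_trig_mx A -> strictly_lower X -> strictly_lower (A *m X).
Proof.
move=> /is_trig_mxP A_lo X_slo i j ij; rewrite mxE big1 // => k _.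
have [ik|ki] := ltnP i k; first by rewrite A_lo ?mul0r.
by rewrite X_slo ?mulr0 // (leq_trans ki ij).
Qed.

Lemma strictly_lower_mulmxr X A : strictly_lower X -> is_trig_mx A -> strictly_lower (X *m A).
Proof.
move=> X_slo /is_trig_mxP A_lo i j ij; rewrite mxE big1 // => k _.
have [ik|ki] := leqP i k; first by rewrite X_slo ?mul0r.
by rewrite A_lo ?mulr0 // (leq_trans ki ij).
Qed.

Lemma strictly_lowerB X Y : strictly_lower X -> strictly_lower Y -> strictly_lower (X - Y).
Proof. by move=> X_slo Y_slo i j ij; rewrite !mxE X_slo ?Y_slo ?subrr. Qed.

Lemma strictly_lower_commutator A X :
  is_trig_mx A -> strictly_lower X -> strictly_lower (A *m X - X *m A).
Proof.
move=> A_lo X_slo.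
exact: strictly_lowerB (strictly_lower_mulmxl A_lo X_slo) (strictly_lower_mulmxr X_slo A_lo).
Qed.

Lemma mxtrace_strictly_lower X : strictly_lower X -> \tr X = 0.
Proof. by move=> X_slo; rewrite /mxtrace big1 // => i _; apply: X_slo. Qed.

End Triangular.

Section SquareMatrices.
Variables (R : pzRingType) (n : nat).
Implicit Types (A B C X : 'M[R]_n).

Lemma conj_prodmx A B (I : Type) (r : seq I) (P : pred I) (F : I -> 'M[R]_n) :
  A *m B = 1%:M -> B *m A = 1%:M ->
  B *m (\prod_(i <- r | P i) F i) *m A = \prod_(i <- r | P i) (B *m F i *m A).
Proof.
move=> AB BA; rewrite mulmxE (big_morph (fun C => B * C * A) (id1 := 1) (op1 := *%R)) //.
  by move=> C C'; rewrite -!mulmxE !mulmxA -[B *m C *m A *m B]mulmxA AB mulmx1.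
by rewrite mulr1 -!mulmxE BA.
Qed.

Lemma conj_mulmxK A B X : B *m A = 1%:M -> B *m (A *m X *m B) *m A = X.
Proof. by move=> BA; rewrite !mulmxA BA mul1mx -mulmxA BA mulmx1. Qed.

Lemma conj_commutator A B C X : B *m A = 1%:M ->
  (B *m C *m A) *m X - X *m (B *m C *m A) = B *m (C *m (A *m X *m B) - (A *m X *m B) *m C) *m A.
Proof.
move=> BA; rewrite mulmxBr mulmxBl !mulmxA -[B *m C *m A *m X *m B *m A]mulmxA.
by rewrite !BA mulmx1 mul1mx.
Qed.

Lemma mxtrace_delta_mulmx i A : \tr (delta_mx i i *m A) = A i i.
Proof.
rewrite /mxtrace (bigD1 i) //= big1 => [|k ki]; last first.
  by rewrite mxE big1 // => l _; rewrite mxE (negPf ki) mul0r.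
rewrite mxE (bigD1 i) //= big1 => [|l li]; rewrite mxE ?eqxx ?mul1r ?addr0 //.
by rewrite (negPf li) andbF mul0r.
Qed.

Lemma prod_diag_mx (I : Type) (r : seq I) (P : pred I) (F : I -> 'rV[R]_n) :
  \prod_(i <- r | P i) diag_mx (F i) = diag_mx (\row_k \prod_(i <- r | P i) F i 0 k).
Proof.
elim: r => [|i r IH].
  by rewrite big_nil -idmxE -diag_const_mx; congr diag_mx; apply/rowP => k; rewrite !mxE big_nil.
rewrite big_cons IH; case: ifP => Pi; last first.
  by congr diag_mx; apply/rowP => k; rewrite !mxE big_cons Pi.
by rewrite -mulmxE mulmx_diag; congr diag_mx; apply/rowP => k; rewrite !mxE big_cons Pi.
Qed.

End SquareMatrices.

Section Vectorization.
Variables (R : realType) (d : nat).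

Lemma vec_idx_subproof (a b : 'I_d) : (b * d + a < d * d)%N.
Proof. by have := ltn_ord a; have := ltn_ord b; nia. Qed.

Definition vec_idx (a b : 'I_d) : 'I_(d * d) := Ordinal (vec_idx_subproof a b).

Lemma omod_vec_idx a b : omod (vec_idx a b) = a.
Proof. by apply: val_inj; rewrite /= modnMDl modn_small. Qed.

Lemma odiv_vec_idx a b : odiv (vec_idx a b) = b.
Proof.
have d_gt0 : (0 < d)%N := leq_ltn_trans (leq0n _) (ltn_ord a).
by apply: val_inj; rewrite /= divnMDl // divn_small ?addn0.
Qed.

Lemma vec_idx_odiv_omod k : vec_idx (omod k) (odiv k) = k.
Proof. by apply: val_inj; rewrite /= -divn_eq. Qed.

Lemma big_ord_vec (T : Type) (idx : T) (op : Monoid.com_law idx) (F : 'I_d -> 'I_d -> T) :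
  \big[op/idx]_(k < d * d) F (omod k) (odiv k) = \big[op/idx]_a \big[op/idx]_b F a b.
Proof.
rewrite pair_big (reindex (fun p : 'I_d * 'I_d => vec_idx p.1 p.2)) /=.
  by apply: eq_bigr => -[a b] _; rewrite omod_vec_idx odiv_vec_idx.
exists (fun k => (omod k, odiv k)) => [[a b] _|k _] /=.
  by rewrite omod_vec_idx odiv_vec_idx.
exact: vec_idx_odiv_omod.
Qed.

Definition cvec (X : 'M[R]_d) : 'cV[R]_(d * d) := \col_k X (omod k) (odiv k).

Definition uncvec (z : 'cV[R]_(d * d)) : 'M[R]_d := \matrix_(a, b) z (vec_idx a b) 0.

Lemma uncvecK : cancel uncvec cvec.
Proof. by move=> z; apply/colP => k; rewrite !mxE vec_idx_odiv_omod. Qed.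

Lemma cvecB X Y : cvec (X - Y) = cvec X - cvec Y.
Proof. by apply/colP => k; rewrite !mxE. Qed.

Lemma frob2_cvec X : frob2 (cvec X) = frob2 X.
Proof.
rewrite frob2_cV; under eq_bigr do rewrite mxE.
exact: (big_ord_vec _ (fun a b => X a b ^+ 2)).
Qed.

Lemma kron_cvec (A C X : 'M[R]_d) : kron A C *m cvec X = cvec (C *m X *m A^T).
Proof.
apply/colP => k; rewrite !mxE.
under eq_bigr do rewrite !mxE.
rewrite (big_ord_vec _ (fun a b => A (odiv k) b * C (omod k) a * X a b)) exchange_big /=.
apply: eq_bigr => b _; rewrite !mxE mulr_suml; apply: eq_bigr => a _; ring.
Qed.

End Vectorization.

Section LowerTriangularSelection.
Variables (R : realType) (d : nat).
Local Notation D := ((d * (d - 1)) %/ 2)%N.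
Local Notation P := (Plow R d).

Lemma mem_low_idx k : (k \in low_idx d) = (k < d * d)%N && (k %/ d < k %% d)%N.
Proof. by rewrite mem_filter mem_iota andbC. Qed.

Lemma size_low_idx : size (low_idx d) = D.
Proof.
rewrite size_filter -sum1_count big_mkcond /= -[X in iota 0 X]subn0 big_mkord.
rewrite (big_ord_vec _ (fun a b : 'I_d => if (b < a)%N then 1 else 0)%N).
rewrite (eq_bigr (fun a : 'I_d => nat_of_ord a)) => [|a _]; last first.
  by rewrite -big_mkcond /= -(big_ord_widen _ (fun=> 1%N) (ltnW (ltn_ord a))) sum1_card card_ord.
by rewrite -(big_mkord xpredT (fun a => a)) bin2_sum bin2 -divn2 subn1.
Qed.

Lemma low_idx_lt (m : 'I_D) : (nth 0 (low_idx d) m < d * d)%N.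
Proof.
have : nth 0 (low_idx d) m \in low_idx d by rewrite mem_nth ?size_low_idx.
by rewrite mem_low_idx => /andP[].
Qed.

Definition low_ord (m : 'I_D) : 'I_(d * d) := Ordinal (low_idx_lt m).

Lemma low_ord_lower m : (odiv (low_ord m) < omod (low_ord m))%N.
Proof.
have : nth 0 (low_idx d) m \in low_idx d by rewrite mem_nth ?size_low_idx.
by rewrite mem_low_idx => /andP[].
Qed.

Lemma low_ord_inj : injective low_ord.
Proof.
move=> m m' /(congr1 val) /= /eqP; rewrite nth_uniq ?size_low_idx //.
  by move/eqP/val_inj.
exact/filter_uniq/iota_uniq.
Qed.

Lemma low_ordP k : (odiv k < omod k)%N -> exists m, low_ord m = k.
Proof.
move=> k_low; have k_in : val k \in low_idx d by rewrite mem_low_idx ltn_ord.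
have m_lt : (index (val k) (low_idx d) < D)%N by rewrite -size_low_idx index_mem.
by exists (Ordinal m_lt); apply: val_inj; rewrite /= nth_index.
Qed.

Lemma PlowE m k : P m k = (low_ord m == k)%:R.
Proof. by rewrite mxE. Qed.

Lemma Plow_mulmx n (M : 'M[R]_(d * d, n)) m j : (P *m M) m j = M (low_ord m) j.
Proof.
rewrite mxE (bigD1 (low_ord m)) //= PlowE eqxx mul1r big1 ?addr0 // => k /negPf km.
by rewrite PlowE eq_sym km mul0r.
Qed.

Lemma Plow_mul_tr : P *m P^T = 1%:M.
Proof.
apply/matrixP => m m'; rewrite Plow_mulmx mxE PlowE !mxE.
by rewrite (inj_eq low_ord_inj) eq_sym.
Qed.

Lemma frob2_Plow_tr (x : 'cV[R]_D) : frob2 (P^T *m x) = frob2 x.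
Proof. by rewrite -!vdotuu vdot_mulmxl trmxK mulmxA Plow_mul_tr mul1mx. Qed.

Lemma Plow_tr_cvec (x : 'cV[R]_D) : exists2 X, strictly_lower X & P^T *m x = cvec X.
Proof.
exists (uncvec (P^T *m x)); last by rewrite uncvecK.
move=> a b ab; rewrite !mxE big1 // => m _; rewrite mxE PlowE.
case: eqP => [low_ab|]; last by rewrite mul0r.
by move: (low_ord_lower m); rewrite low_ab odiv_vec_idx omod_vec_idx ltnNge ab.
Qed.

Lemma Plow_trK_cvec X : strictly_lower X -> P^T *m (P *m cvec X) = cvec X.
Proof.
move=> X_slo; apply/colP => k; rewrite mxE.
have [/low_ordP[m0 <-]|k_up] := boolP (odiv k < omod k)%N.
  rewrite (bigD1 m0) //= big1 => [|m /negPf m_m0]; last first.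
    by rewrite mxE PlowE (inj_eq low_ord_inj) m_m0 mul0r.
  by rewrite mxE PlowE eqxx mul1r Plow_mulmx addr0.
rewrite big1 => [|m _]; first by rewrite mxE X_slo // leqNgt.
by rewrite mxE PlowE; case: eqP => [km|]; [move: k_up; rewrite -km low_ord_lower | rewrite mul0r].
Qed.

Lemma frob2_Plow_cvec X : strictly_lower X -> frob2 (P *m cvec X) = frob2 X.
Proof.
move=> X_slo; rewrite -vdotuu vdot_mulmxl Plow_trK_cvec //.
by rewrite vdotuu frob2_cvec.
Qed.

End LowerTriangularSelection.

Lemma frob2_diag_commutator_ge (R : realFieldType) (N n : nat) (Lam : 'I_N -> 'I_n -> R)
    (gamma : R) (Y : 'M[R]_n) :
  (forall i j : 'I_n, i != j -> gamma <= \sum_(k < N) (Lam k i - Lam k j) ^+ 2) ->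
  (forall i, Y i i = 0) ->
  gamma * frob2 Y <=
    \sum_(k < N) frob2 (diag_mx (\row_l Lam k l) *m Y - Y *m diag_mx (\row_l Lam k l)).
Proof.
move=> gamma_le Y_diag0.
have entry k a b : (diag_mx (\row_l Lam k l) *m Y - Y *m diag_mx (\row_l Lam k l)) a b ^+ 2
    = (Lam k a - Lam k b) ^+ 2 * Y a b ^+ 2.
  by rewrite mul_diag_mx mul_mx_diag !mxE -exprMn; congr (_ ^+ 2); ring.
have -> : \sum_(k < N) frob2 (diag_mx (\row_l Lam k l) *m Y - Y *m diag_mx (\row_l Lam k l))
    = \sum_a \sum_b (\sum_(k < N) (Lam k a - Lam k b) ^+ 2) * Y a b ^+ 2.
  rewrite exchange_big; apply: eq_bigr => a _; rewrite exchange_big.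
  by apply: eq_bigr => b _; rewrite mulr_suml; apply: eq_bigr => k _; rewrite entry.
rewrite /frob2 mulr_sumr; apply: ler_sum => a _; rewrite mulr_sumr; apply: ler_sum => b _.
have [<-|ab] := eqVneq a b; first by rewrite Y_diag0 expr0n /= !mulr0.
by rewrite ler_wpM2r ?sqr_ge0 ?gamma_le.
Qed.

Section CommutatorBound.
Variables (R : realType) (d N : nat) (V U : 'M[R]_d) (Lam : 'I_N -> 'I_d -> R) (gamma : R).
Hypothesis d_gt0 : (0 < d)%N.
Hypothesis V_unit : V \in unitmx.
Hypothesis gamma_le : forall i i' : 'I_d, (i' < i)%N ->
  gamma <= \sum_(n < N) (Lam n i - Lam n i') ^+ 2.
Hypothesis gamma_gt0 : 0 < gamma.
Hypothesis UtU : U^T *m U = 1%:M.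
Hypothesis B_upper : forall (n : 'I_N) (i j : 'I_d), (j < i)%N ->
  (U^T *m (V *m diag_mx (\row_k Lam n k) *m invmx V) *m U) i j = 0.

Local Notation L n := (diag_mx (\row_k Lam n k) : 'M[R]_d).
Local Notation B n := (U^T *m (V *m L n *m invmx V) *m U).
Let G := V^T *m U.
Let Gi := U^T *m (invmx V)^T.

Let G_mulGi : G *m Gi = 1%:M.
Proof. by rewrite mulmxA -(mulmxA V^T) (mulmx1C UtU) mulmx1 -trmx_mul mulVmx // trmx1. Qed.

Let Gi_mulG : Gi *m G = 1%:M.
Proof. by rewrite mulmxA -(mulmxA U^T) -trmx_mul mulmxV // trmx1 mulmx1. Qed.

Let trB n : (B n)^T = Gi *m L n *m G.
Proof. by rewrite !trmx_mul !trmxK tr_diag_mx !mulmxA. Qed.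

Let trB_trig n : is_trig_mx (B n)^T.
Proof. by apply/is_trig_mxP => i j ij; rewrite mxE B_upper. Qed.

Let gamma_le_neq i j : i != j -> gamma <= \sum_(n < N) (Lam n i - Lam n j) ^+ 2.
Proof.
rewrite neq_ltn => /orP[ij|]; last exact: gamma_le.
by under eq_bigr do rewrite -sqrrN opprB; apply: gamma_le.
Qed.

Section EigenProjector.
Variable i : 'I_d.

Let g j := \sum_(n < N) (Lam n i - Lam n j) ^+ 2.
(* [f j] is 1 at [i] and 0 at [j], so the product of the [diag_mx (f j)], j <> i, is e_i e_i^T. *)
Let f j : 'rV[R]_d := \row_k \sum_(n < N) (Lam n i - Lam n j) / g j * (Lam n k - Lam n j).

Let diag_f j : diag_mx (f j) = \sum_(n < N) ((Lam n i - Lam n j) / g j) *: (L n - (Lam n j)%:M).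
Proof.
apply/matrixP => a b; rewrite summxE !mxE.
have [<-|ab] := eqVneq a b.
  by rewrite mulr1n; apply: eq_bigr => n _; rewrite !mxE eqxx !mulr1n.
by rewrite mulr0n big1 // => n _; rewrite !mxE (negPf ab) !mulr0n subrr mulr0.
Qed.

Let prod_diag_f : \prod_(j | j != i) diag_mx (f j) = delta_mx i i.
Proof.
rewrite prod_diag_mx; apply/matrixP => a b; rewrite !mxE.
have [->|ai] := eqVneq a i.
  rewrite big1 => [|j ji]; first by rewrite eq_sym; case: (b == i).
  have g_gt0 : 0 < g j.
    by apply: lt_le_trans gamma_gt0 (gamma_le_neq _); rewrite eq_sym.
  rewrite mxE; under eq_bigr do rewrite mulrAC -expr2.
  by rewrite -mulr_suml divff ?gt_eqF.
rewrite (bigD1 a) //= mxE big1 ?mul0r ?mul0rn // => n _.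
by rewrite subrr mulr0.
Qed.

Lemma eigenprojector_trig : is_trig_mx (Gi *m delta_mx i i *m G).
Proof.
rewrite -prod_diag_f conj_prodmx //.
apply: is_trig_mx_prod => j _; rewrite diag_f mulmx_sumr mulmx_suml.
apply: is_trig_mx_sum => n _; rewrite -scalemxAr -scalemxAl; apply: is_trig_mxZ.
rewrite mulmxBr mulmxBl -trB mul_mx_scalar -scalemxAl Gi_mulG scalemx1.
by rewrite is_trig_mxB ?trB_trig ?scalar_mx_is_trig.
Qed.

End EigenProjector.

Let conj_diag0 X : strictly_lower X -> forall i, (G *m X *m Gi) i i = 0.
Proof.
move=> X_slo i; rewrite -mxtrace_delta_mulmx mulmxA mxtrace_mulC mulmxA.
have := strictly_lower_mulmxl (eigenprojector_trig i) X_slo.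
by rewrite -!mulmxA => /mxtrace_strictly_lower.
Qed.

Lemma commutator_frob2_ge X : strictly_lower X ->
  gamma * frob2 X <= kappa V ^+ 4 * \sum_(n < N) frob2 ((B n)^T *m X - X *m (B n)^T).
Proof.
move=> X_slo; set s := sigma_max V ^+ 2; set t := sigma_min V ^-2.
have s_ge0 : 0 <= s := sqr_ge0 _.
have t_ge0 : 0 <= t by rewrite invr_ge0 sqr_ge0.
have oV : opbound V s := opbound_sigma_max d_gt0 V.
have oVi : opbound (invmx V) t := opbound_invmx_sigma_min d_gt0 V_unit.
have oU := opbound_orthomx UtU.
have oG : opbound G s by have := opbound_mulmx s_ge0 (opbound_tr s_ge0 oV) oU; rewrite mulr1.
have oGi : opbound Gi t.
  by have := opbound_mulmx ler01 (opbound_tr ler01 oU) (opbound_tr t_ge0 oVi); rewrite mul1r.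
have oGt := opbound_tr s_ge0 oG; have oGit := opbound_tr t_ge0 oGi.
set Y := G *m X *m Gi.
have X_le : frob2 X <= t * s * frob2 Y.
  by rewrite -{1}(conj_mulmxK X Gi_mulG); apply: frob2_sandwich_le.
have comm_le n : frob2 (L n *m Y - Y *m L n) <= s * t * frob2 ((B n)^T *m X - X *m (B n)^T).
  rewrite trB conj_commutator // -{1}(conj_mulmxK (L n *m Y - Y *m L n) G_mulGi).
  exact: frob2_sandwich_le.
have Y_ge : gamma * frob2 Y <= \sum_(n < N) frob2 (L n *m Y - Y *m L n).
  by apply: frob2_diag_commutator_ge => [i j /gamma_le_neq|i] //; apply: conj_diag0.
have -> : kappa V ^+ 4 = t * s * (s * t) by rewrite /kappa /s /t -!exprVn; ring.
apply: le_trans (ler_wpM2l (ltW gamma_gt0) X_le) _.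
rewrite mulrCA -[t * s * _ * _]mulrA; apply: ler_wpM2l; first exact: mulr_ge0.
apply: le_trans Y_ge _; rewrite mulr_sumr; apply: ler_sum => n _; exact: comm_le.
Qed.

End CommutatorBound.

Theorem lemma6 (R : realType) (d N : nat) (V : 'M[R]_d) (Lam : 'I_N -> 'I_d -> R)
  (gamma : R) (U : 'M[R]_d) :
  V \in unitmx ->
  (exists i i' : 'I_d, (i' < i)%N /\
     gamma = \sum_(n < N) (Lam n i - Lam n i') ^+ 2) ->
  (forall i i' : 'I_d, (i' < i)%N ->
     gamma <= \sum_(n < N) (Lam n i - Lam n i') ^+ 2) ->
  0 < gamma ->
  U^T *m U = 1%:M ->
  (forall (n : 'I_N) (i j : 'I_d), (j < i)%N ->
     (U^T *m (V *m diag_mx (\row_k Lam n k) *m invmx V) *m U) i j = 0) ->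
  let M := fun n : 'I_N => V *m diag_mx (\row_k Lam n k) *m invmx V in
  let B := fun n : 'I_N => U^T *m M n *m U in
  let t := fun n : 'I_N =>
    Plow R d *m (kron 1%:M (B n)^T - kron (B n) 1%:M) *m (Plow R d)^T in
  let T := \sum_(n < N) (t n)^T *m t n in
  T \in unitmx /\
  gamma / kappa V ^+ 4 <= sigma_min T /\
  frob (invmx T) <= Num.sqrt ((d * (d - 1)) %/ 2)%:R * (kappa V ^+ 4 / gamma).
Proof.
(* That the minimum gamma is attained only matters through d >= 2. *)
move=> V_unit [i [i' [i'_lt_i _]]] gamma_le gamma_gt0 UtU B_upper M B t T.
have d_gt0 : (0 < d)%N := leq_ltn_trans (leq0n _) (ltn_ord i).
have D_gt0 : (0 < (d * (d - 1)) %/ 2)%N.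
  by rewrite divn_gt0 //; have := ltn_ord i; move: i'_lt_i; clear; nia.
have kappa4_gt0 : 0 < kappa V ^+ 4 by rewrite exprn_gt0 ?kappa_gt0.
set c := gamma / kappa V ^+ 4.
have c_gt0 : 0 < c by rewrite divr_gt0.
have T_lb (x : 'cV_((d * (d - 1)) %/ 2)) : c * frob x <= frob (T *m x).
  apply: (@frob_mulmx_ge_vdot _ _ T _ c_gt0); rewrite vdot_sum_gram.
  have [X X_slo PtX] := Plow_tr_cvec x.
  have B_trig n : is_trig_mx (B n)^T by apply/is_trig_mxP => a b ab; rewrite mxE B_upper.
  have t_x n : frob2 (t n *m x) = frob2 ((B n)^T *m X - X *m (B n)^T).
    rewrite /t -!mulmxA PtX mulmxBl !kron_cvec trmx1 mulmx1 mul1mx -cvecB.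
    by rewrite frob2_Plow_cvec //; apply: strictly_lower_commutator.
  under eq_bigr do rewrite t_x.
  rewrite -frob2_Plow_tr PtX frob2_cvec /c mulrAC ler_pdivrMr // [_ * kappa V ^+ 4]mulrC.
  by have := commutator_frob2_ge d_gt0 V_unit gamma_le gamma_gt0 UtU B_upper X_slo; rewrite /B /M.
split; first exact: unitmx_of_frob_lb c_gt0 T_lb.
split; first by apply: (sigma_min_ge D_gt0); apply: T_lb.
by rewrite -invf_div; apply: frob_invmx_le c_gt0 T_lb.
Qed.
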